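(* Let $\Pi$ be a set of $n\ge2$ processes and let $\mathcal{G}^1,\mathcal{G}^2,\dots$ be an infinite sequence of simple directed graphs on $\Pi$ such that every $\mathcal{G}^r$, $r>0$, contains at most one root component. Then (i) there is at least one process $p$ such that $d_1(p,q)$ is finite for all $q\in\Pi$, and in fact $d_1(p,q)\le n(n-2)+1$ for all $q\in\Pi$. Conversely, (ii) for $n>2$ there exist sequences of graphs, each containing exactly one root component, such that no process $p$ is causally influenced by all other processes, i.e., there is no $p$ with $d_1(q,p)<\infty$ for all $q\in\Pi$.
   Context: $\mathcal{G}^r$ is the round-$r$ communication graph. A root component of $\mathcal{G}^r$ is a strongly connected component $\mathcal{R}$ of $\mathcal{G}^r$ such that there is no edge $(q\to p)\in\mathcal{G}^r$ with $p\in\mathcal{R}$, $q\notin\mathcal{R}$. Process $p$ causally influences $q$ in round $t$ if $q=p$ or $(p\to q)\in\mathcal{G}^t$. A causal chain of length $k\ge1$ from $p$ in round $t$ to $q$ is a sequence $p=p_0,\dots,p_k=q$ with $p_i$ causally influencing $p_{i+1}$ in round $t+i$ for $0\le i<k$; the causal distance $d_t(p,q)$ is the minimum length of such a chain, and $\infty$ if none exists. *)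

From mathcomp Require Import all_boot.
Set Implicit Arguments. Unset Strict Implicit. Unset Printing Implicit Defensive.

(* A simple directed graph on a finite process set T: an irreflexive edge relation
   (G p q means the edge p -> q). *)
Definition simple_digraph (T : finType) (G : rel T) : Prop := forall p, ~~ G p p.

Definition is_scc (T : finType) (G : rel T) (R : {set T}) : Prop :=
  exists2 p, p \in R & forall q, (q \in R) = (connect G p q && connect G q p).

Definition is_root_component (T : finType) (G : rel T) (R : {set T}) : Prop :=
  is_scc G R /\ forall p q, p \in R -> q \notin R -> ~~ G q p.

Definition at_most_one_root (T : finType) (G : rel T) : Prop :=
  forall R1 R2, is_root_component G R1 -> is_root_component G R2 -> R1 = R2.

Definition exactly_one_root (T : finType) (G : rel T) : Prop :=
  exists R, is_root_component G R /\
    forall R', is_root_component G R' -> R' = R.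

(* A graph sequence: round r graph is Gs r (only rounds r >= 1 are used). *)
Definition influences (T : finType) (Gs : nat -> rel T) (t : nat) (p q : T) : Prop :=
  q = p \/ Gs t p q.

Fixpoint causal_chain (T : finType) (Gs : nat -> rel T) (t k : nat) (p q : T) : Prop :=
  match k with
  | 0 => p = q
  | k'.+1 => exists r, influences Gs t p r /\ causal_chain Gs t.+1 k' r q
  end.

Definition causal_dist_le (T : finType) (Gs : nat -> rel T) (t : nat) (p q : T) (b : nat) : Prop :=
  exists2 k, 1 <= k <= b & causal_chain Gs t k p q.

Definition causal_dist_finite (T : finType) (Gs : nat -> rel T) (t : nat) (p q : T) : Prop :=
  exists2 k, 1 <= k & causal_chain Gs t k p q.

From mathcomp Require Import all_boot zify.
Set Implicit Arguments. Unset Strict Implicit. Unset Printing Implicit Defensive.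

(* (i) A graph with at most one root component has a process reaching every
   other one (the source of its unique root).  Let [reach p t] be the set of
   processes at the end of a causal chain of length t from p starting in
   round 1.  In round t+1 the universal source x of G^(t+1) strictly enlarges
   [reach x t] unless it is already everything, so the potential
   sum_p #|reach p t|, which starts at n and stays at most n(n-1) while no
   reach set is full, grows by at least one per round; hence some reach set is
   full after n(n-2)+1 rounds.
   (ii) In the star from a centre z to every other process, each non-centre
   process only ever hears of itself, so no process is influenced by two
   distinct non-centre processes. *)

Section RootSource.

Variables (T : finType) (G : rel T).

Lemma exists_source_reaching (v : T) :
  exists2 u, connect G u v & forall w, connect G w u -> connect G u w.
Proof.
have [u Puv u_min] :=
  @arg_minnP _ v (connect G ^~ v) (fun u => #|[set w | connect G w u]|) (connect0 G v).
exists u => // w Gwu.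
have sub_wu : [set x | connect G x w] \subset [set x | connect G x u].
  by apply/subsetP => x; rewrite !inE => Gxw; apply: connect_trans Gxw Gwu.
have /eqP eq_wu : [set x | connect G x w] == [set x | connect G x u].
  by rewrite eqEcard sub_wu u_min // (connect_trans Gwu Puv).
have : u \in [set x | connect G x u] by rewrite inE connect0.
by rewrite -eq_wu inE.
Qed.

Lemma root_component_of_source (u : T) :
  (forall w, connect G w u -> connect G u w) ->
  is_root_component G [set q | connect G u q && connect G q u].
Proof.
move=> u_src; split; first by exists u => [|q]; rewrite inE ?connect0.
move=> p q; rewrite !inE => /andP [_ Gpu] q_out; apply/negP => Gqp.
have Gqu : connect G q u by apply: connect_trans (connect1 Gqp) Gpu.
by move: q_out; rewrite Gqu u_src.
Qed.

Lemma at_most_one_root_universal (x0 : T) :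
  at_most_one_root G -> exists x, forall y, connect G x y.
Proof.
move=> one_root; have [u0 _ u0_src] := exists_source_reaching x0.
exists u0 => y; have [u Guy u_src] := exists_source_reaching y.
have := one_root _ _ (root_component_of_source u0_src) (root_component_of_source u_src).
move=> /setP /(_ u0); rewrite !inE !connect0 => /esym /andP [_ Guu0].
exact: connect_trans Guu0 Guy.
Qed.

Lemma connect_exit (S : {set T}) x y :
  connect G x y -> x \in S -> y \notin S -> exists a b, [/\ G a b, a \in S & b \notin S].
Proof.
move=> /connectP [s]; elim: s x => [|z s IH] x /=; first by move=> _ -> ->.
move=> /andP [Gxz zs] y_last xS yS; case zS: (z \in S); first exact: IH zs y_last zS yS.
by exists x, z; rewrite zS.
Qed.

End RootSource.

Section Reach.

Variables (T : finType) (Gs : nat -> rel T).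

Fixpoint reach (p : T) (t : nat) : {set T} :=
  if t is t'.+1 then
    reach p t' :|: [set q | [exists r in reach p t', Gs t'.+1 r q]]
  else [set p].

Lemma reach_self p t : p \in reach p t.
Proof. by elim: t => [|t IH] /=; rewrite !inE ?eqxx ?IH. Qed.

Lemma reach_subS p t : reach p t \subset reach p t.+1.
Proof. exact: subsetUl. Qed.

Lemma causal_chain_rcons t k p r q :
  causal_chain Gs t k p r -> influences Gs (t + k) r q -> causal_chain Gs t k.+1 p q.
Proof.
elim: k t p => [|k IH] t p /=; first by move=> ->; rewrite addn0; exists q.
move=> [r' [infl chain]] infl_rq; exists r'; split => //.
by apply: IH chain _; rewrite addSnnS.
Qed.

Lemma causal_chain_reach p t q : q \in reach p t -> causal_chain Gs 1 t p q.
Proof.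
elim: t q => [|t IH] q /=; first by rewrite inE => /eqP ->.
rewrite !inE => /orP [q_in | /existsP [r /andP [r_in Grq]]].
  by apply: causal_chain_rcons (IH _ q_in) _; left.
by apply: causal_chain_rcons (IH _ r_in) _; right; rewrite add1n.
Qed.

Lemma reach_proper_succ x t :
  (forall y, connect (Gs t.+1) x y) -> reach x t != setT -> reach x t \proper reach x t.+1.
Proof.
move=> x_univ; rewrite -properT => /properP [_ [y _ y_out]].
have [a [b [Gab a_in b_out]]] := connect_exit (x_univ y) (reach_self x t) y_out.
apply/properP; split; first exact: reach_subS.
by exists b => //; rewrite !inE; apply/orP; right; apply/existsP; exists a; rewrite a_in.
Qed.

Definition reach_potential t := \sum_(p : T) #|reach p t|.

Lemma reach_potential_lb (x0 : T) t :
  (forall r, 0 < r -> at_most_one_root (Gs r)) ->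
  (forall p, reach p t != setT) -> #|T| + t <= reach_potential t.
Proof.
move=> one_root; elim: t => [|t IH] not_full.
  by rewrite addn0 /reach_potential -sum1_card; apply: leq_sum => p _; rewrite cards1.
have not_full_t p : reach p t != setT.
  by apply: contraNneq (not_full p) => full; rewrite eqEsubset subsetT -full reach_subS.
have [x x_univ] := at_most_one_root_universal x0 (one_root t.+1 isT).
have grow_x := proper_card (reach_proper_succ x_univ (not_full_t x)).
have grow_rest : \sum_(p | p != x) #|reach p t| <= \sum_(p | p != x) #|reach p t.+1|.
  by apply: leq_sum => p _; apply/subset_leq_card/reach_subS.
have split_x s : reach_potential s = #|reach x s| + \sum_(p | p != x) #|reach p s|.
  by rewrite /reach_potential (bigD1 x).
by have := IH not_full_t; rewrite !split_x; lia.
Qed.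

Lemma reach_potential_ub t :
  (forall p, reach p t != setT) -> reach_potential t <= #|T| * (#|T| - 1).
Proof.
move=> not_full; rewrite -sum_nat_const; apply: leq_sum => p _.
by have := not_full p; rewrite -properT => /proper_card; rewrite cardsT; lia.
Qed.

Lemma exists_reach_full (x0 : T) :
  (forall r, 0 < r -> at_most_one_root (Gs r)) ->
  exists p, reach p (#|T| * (#|T| - 2) + 1) = setT.
Proof.
move=> one_root; set t := _ + 1.
have [/existsP [p /eqP full] | ] := boolP [exists p, reach p t == setT].
  by exists p.
rewrite negb_exists => /forallP not_full.
have := reach_potential_lb x0 one_root (fun p => not_full p).
have := reach_potential_ub (fun p => not_full p).
have : 0 < #|T| by apply/card_gt0P; exists x0.
rewrite /t; move: #|T| (reach_potential _) => n P; case: n => // m _; nia.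
Qed.

End Reach.

Section Star.

Variables (T : finType) (z : T).

Definition star : rel T := fun a b => (a == z) && (b != z).

Lemma star_simple : simple_digraph star.
Proof. by move=> p; rewrite /star; case: (p == z). Qed.

Lemma connect_star_center x : connect star x z -> x = z.
Proof.
move=> /connectP [s]; elim: s x => [|y s IH] x /=; first by move=> _ ->.
by move=> /andP [/andP [/eqP -> _] _].
Qed.

Lemma star_root_center : is_root_component star [set z].
Proof.
split; last by move=> p q; rewrite !inE => /eqP ->; rewrite /star eqxx andbF.
exists z => [|q]; rewrite !inE ?eqxx //.
apply/eqP/andP => [-> | [_ /connect_star_center //]]; by rewrite connect0.
Qed.

Lemma star_exactly_one_root : exactly_one_root star.
Proof.
exists [set z]; split => [|R [[u u_in R_scc] R_root]]; first exact: star_root_center.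
have u_z : u = z.
  apply/eqP; apply: contraT => u_nz.
  have z_out : z \notin R.
    by rewrite R_scc; apply: contraNN u_nz => /andP [/connect_star_center -> _].
  by have := R_root _ _ u_in z_out; rewrite /star eqxx u_nz.
apply/setP => q; rewrite R_scc u_z inE.
apply/andP/eqP => [[_ /connect_star_center //] | ->]; by rewrite connect0.
Qed.

Lemma causal_chain_star_const q t k r :
  q != z -> causal_chain (fun _ => star) t k q r -> r = q.
Proof.
move=> q_nz; elim: k t => [|k IH] t /=; first by move=> ->.
by move=> [r' [[-> | /andP [/eqP q_z]] chain]]; [exact: IH chain | rewrite q_z eqxx in q_nz].
Qed.

Lemma star_no_common_sink :
  2 < #|T| -> ~ exists p, forall q, causal_dist_finite (fun _ => star) 1 q p.
Proof.
move=> card_T [p p_sink].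
have [q _] : exists2 q, q \in setT & q \notin [set z; p].
  apply/subsetPn; apply: contraL card_T => /subset_leq_card.
  by rewrite cardsT cards2 -leqNgt => /leq_trans; apply; rewrite ltnS leq_b1.
rewrite !inE negb_or => /andP [q_nz q_np].
have [k _ chain] := p_sink q.
by rewrite (causal_chain_star_const q_nz chain) eqxx in q_np.
Qed.

End Star.

Theorem lemma14 :
  (forall (n : nat) (Gs : nat -> rel 'I_n),
     2 <= n ->
     (forall r, 0 < r -> simple_digraph (Gs r) /\ at_most_one_root (Gs r)) ->
     exists p : 'I_n, forall q : 'I_n,
       causal_dist_finite Gs 1 p q /\ causal_dist_le Gs 1 p q (n * (n - 2) + 1))
  /\
  (forall n : nat, 2 < n ->
     exists Gs : nat -> rel 'I_n,
       (forall r, 0 < r -> simple_digraph (Gs r) /\ exactly_one_root (Gs r)) /\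
       ~ (exists p : 'I_n, forall q : 'I_n, causal_dist_finite Gs 1 q p)).
Proof.
split=> [n Gs n_ge2 G_ok | n n_gt2].
  have one_root r (r_gt0 : 0 < r) := (G_ok r r_gt0).2.
  have [p full] := exists_reach_full (Ordinal (ltnW n_ge2)) one_root.
  exists p => q; rewrite card_ord in full.
  have chain : causal_chain Gs 1 (n * (n - 2) + 1) p q.
    by apply: causal_chain_reach; rewrite full inE.
  by split; exists (n * (n - 2) + 1); rewrite // addn1 /= ?ltnSn.
have z : 'I_n := Ordinal (ltnW n_gt2).
exists (fun _ => star z); split.
  by move=> r _; split; [exact: star_simple | exact: star_exactly_one_root].
by apply: star_no_common_sink; rewrite card_ord.
Qed.
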